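(* Let $G$ be a group, $N$ a normal subgroup, $\Gamma=G/N$. Let $d_2\colon\mathrm{H}^1(N)^G\to\mathrm{H}^2(\Gamma)$ be the transgression map of the five-term exact sequence $0\to\mathrm{H}^1(\Gamma)\to\mathrm{H}^1(G)\to\mathrm{H}^1(N)^G\xrightarrow{d_2}\mathrm{H}^2(\Gamma)\to\mathrm{H}^2(G)$. Assume that $\operatorname{Ker}(c^3_\Gamma\colon\mathrm{H}^3_b(\Gamma)\to\mathrm{H}^3(\Gamma))$ and $\mathrm{H}^2(\Gamma)/d_2(\mathrm{H}^1(N)^G)$ are both finite dimensional. Then for every normal subgroup $L$ of $G$ with $L\geqslant N$, $\dim_{\mathbb{R}}\mathcal{W}(G,L,N)<\infty$. In particular, if $\mathrm{H}^3_b(\Gamma)$ and $\mathrm{H}^2(\Gamma)$ are finite dimensional, then $\dim_{\mathbb{R}}\mathcal{W}(G,L,N)<\infty$ for every normal subgroup $L\geqslant N$ of $G$.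
   Context: All (bounded) cohomology is with trivial real coefficients; $\mathrm{H}^*_b$ is bounded cohomology (cohomology of bounded inhomogeneous cochains) and $c^n_\Gamma$ is the comparison map induced by inclusion of bounded cochains. $\mathrm{Q}(N)^G$: homogeneous quasimorphisms on $N$ invariant under $G$-conjugation; $\mathrm{H}^1(N)^G$: $G$-invariant homomorphisms $N\to\mathbb{R}$; $\mathcal{W}(G,L,N)=\mathrm{Q}(N)^G/(\mathrm{H}^1(N)^G+\{\psi|_N:\psi\in\mathrm{Q}(L)^G\})$. *)

From Stdlib Require Import Reals ZArith.
Open Scope R_scope.

Record Group := {
  carrier :> Type;
  gmul : carrier -> carrier -> carrier;
  ginv : carrier -> carrier;
  gone : carrier;
  gmulA : forall x y z, gmul x (gmul y z) = gmul (gmul x y) z;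
  gmul1g : forall x, gmul gone x = x;
  gmulVg : forall x, gmul (ginv x) x = gone }.

Arguments gmul {g}. Arguments ginv {g}. Arguments gone {g}.

Section Defs.
Variable G : Group.

Definition conj (g x : G) : G := gmul (gmul g x) (ginv g).

Fixpoint gpow (x : G) (n : nat) : G :=
  match n with O => gone | S n => gmul (gpow x n) x end.

Definition zpow (x : G) (z : Z) : G :=
  match z with
  | Z0 => gone
  | Zpos p => gpow x (Pos.to_nat p)
  | Zneg p => gpow (ginv x) (Pos.to_nat p)
  end.

Definition is_subgroup (N : G -> Prop) : Prop :=
  N gone /\ (forall x y, N x -> N y -> N (gmul x y)) /\
  (forall x, N x -> N (ginv x)).

Definition is_normal (N : G -> Prop) : Prop :=
  is_subgroup N /\ (forall g x, N x -> N (conj g x)).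

(* H^1(N)^G : G-invariant homomorphisms N -> R (functions G -> R read on N) *)
Definition invariant_hom (N : G -> Prop) (phi : G -> R) : Prop :=
  (forall x y, N x -> N y -> phi (gmul x y) = phi x + phi y) /\
  (forall g x, N x -> phi (conj g x) = phi x).

Definition invariant_hqm (N : G -> Prop) (psi : G -> R) : Prop :=
  (exists D, forall x y, N x -> N y ->
      Rabs (psi (gmul x y) - psi x - psi y) <= D) /\
  (forall x (z : Z), N x -> psi (zpow x z) = IZR z * psi x) /\
  (forall g x, N x -> psi (conj g x) = psi x).

(* inhomogeneous coboundaries, real trivial coefficients *)
Definition cob1 (f : G -> R) (g h : G) : R :=
  f h - f (gmul g h) + f g.
Definition cob2 (c : G -> G -> R) (g h k : G) : R :=
  c h k - c (gmul g h) k + c g (gmul h k) - c g h.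
Definition cob3 (c : G -> G -> G -> R) (g h k l : G) : R :=
  c h k l - c (gmul g h) k l + c g (gmul h k) l - c g h (gmul k l) + c g h k.

Definition cocycle2 (c : G -> G -> R) : Prop := forall g h k, cob2 c g h k = 0.
Definition cocycle3 (c : G -> G -> G -> R) : Prop :=
  forall g h k l, cob3 c g h k l = 0.
Definition bounded1 (f : G -> R) : Prop := exists M, forall g, Rabs (f g) <= M.
Definition bounded2 (c : G -> G -> R) : Prop :=
  exists M, forall g h, Rabs (c g h) <= M.
Definition bounded3 (c : G -> G -> G -> R) : Prop :=
  exists M, forall g h k, Rabs (c g h k) <= M.
End Defs.

Arguments conj {G}.

Fixpoint fsum (m : nat) (u : nat -> R) : R :=
  match m with O => 0 | S m => fsum m u + u m end.

(* Gamma = G/N, realised as a group with a surjective homomorphism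
   pi : G -> Gamma whose kernel is exactly N. *)
Definition quotient_map (G Gam : Group) (N : G -> Prop) (pi : G -> Gam) : Prop :=
  (forall x y, pi (gmul x y) = gmul (pi x) (pi y)) /\
  (forall y, exists x, pi x = y) /\
  (forall x, pi x = gone <-> N x).

(* t is a representative 2-cocycle of the transgression d_2(phi) of some
   phi in H^1(N)^G:  t(pi g, pi h) = (delta f)(g,h) for some f : G -> R with
   f(n g) = phi(n) + f(g) for n in N. *)
Definition in_transgression_image (G Gam : Group) (N : G -> Prop)
    (pi : G -> Gam) (t : Gam -> Gam -> R) : Prop :=
  exists phi : G -> R, invariant_hom G N phi /\
  exists f : G -> R,
    (forall n g, N n -> f (gmul n g) = phi n + f g) /\
    (forall g h, t (pi g) (pi h) = cob1 G f g h).

Definition findim_H2_mod_d2 (G Gam : Group) (N : G -> Prop) (pi : G -> Gam) : Prop :=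
  exists (m : nat) (c : nat -> Gam -> Gam -> R),
    (forall i, cocycle2 Gam (c i)) /\
    forall z, cocycle2 Gam z ->
      exists (a : nat -> R) (t : Gam -> Gam -> R) (b : Gam -> R),
        in_transgression_image G Gam N pi t /\
        forall g h, z g h = fsum m (fun i => a i * c i g h) + t g h + cob1 Gam b g h.

Definition findim_ker_c3 (Gam : Group) : Prop :=
  exists (m : nat) (c : nat -> Gam -> Gam -> Gam -> R),
    (forall i, bounded3 Gam (c i) /\ cocycle3 Gam (c i) /\
               exists u, forall g h k, c i g h k = cob2 Gam u g h k) /\
    forall z, bounded3 Gam z -> cocycle3 Gam z ->
      (exists u, forall g h k, z g h k = cob2 Gam u g h k) ->
      exists (a : nat -> R) (b : Gam -> Gam -> R), bounded2 Gam b /\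
        forall g h k, z g h k = fsum m (fun i => a i * c i g h k) + cob2 Gam b g h k.

Definition findim_H3b (Gam : Group) : Prop :=
  exists (m : nat) (c : nat -> Gam -> Gam -> Gam -> R),
    (forall i, bounded3 Gam (c i) /\ cocycle3 Gam (c i)) /\
    forall z, bounded3 Gam z -> cocycle3 Gam z ->
      exists (a : nat -> R) (b : Gam -> Gam -> R), bounded2 Gam b /\
        forall g h k, z g h k = fsum m (fun i => a i * c i g h k) + cob2 Gam b g h k.

Definition findim_H2 (Gam : Group) : Prop :=
  exists (m : nat) (c : nat -> Gam -> Gam -> R),
    (forall i, cocycle2 Gam (c i)) /\
    forall z, cocycle2 Gam z ->
      exists (a : nat -> R) (b : Gam -> R),
        forall g h, z g h = fsum m (fun i => a i * c i g h) + cob1 Gam b g h.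

(* dim W(G,L,N) = dim Q(N)^G / (H^1(N)^G + Q(L)^G|_N) < oo ;
   functions are compared on N only. *)
Definition findim_W (G : Group) (L N : G -> Prop) : Prop :=
  exists (m : nat) (psi : nat -> G -> R),
    (forall i, invariant_hqm G N (psi i)) /\
    forall psi0, invariant_hqm G N psi0 ->
      exists (a : nat -> R) (h phi : G -> R),
        invariant_hom G N h /\ invariant_hqm G L phi /\
        forall x, N x -> psi0 x = fsum m (fun i => a i * psi i x) + h x + phi x.

(* Fix a set-theoretic section s of pi : G -> Gamma.  For psi in Q(N)^G the
   2-cochain u_psi(a, b) = psi(s(a) s(b) s(ab)^-1) on Gamma [sec_obstruction]
   differs from a coboundary on G by a bounded cochain, so its coboundary is a
   bounded 3-cocycle that is an ordinary coboundary: a class in Ker c^3,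
   depending linearly on psi.  Where that class vanishes, u_psi minus a bounded
   cochain is a 2-cocycle with a class in H^2(Gamma)/d_2(H^1(N)^G).  Where this
   class vanishes too, u_psi = b + t + cob1 b' with b bounded and t = cob1 f a
   transgression cocycle, and the homogenization of the quasimorphism
   g |-> psi(g s(pi g)^-1) + f(g) + b'(pi g) of G is psi plus a G-invariant
   homomorphism on N.  So Q(N)^G is spanned, modulo H^1(N)^G + Q(G)|_N, by at
   most dim Ker c^3 + dim H^2(Gamma)/d_2(H^1(N)^G) elements. *)

From Stdlib Require Import Reals Lra Lia ZArith ClassicalEpsilon FunctionalExtensionality Classical.
Open Scope R_scope.

Arguments gmulA {_}. Arguments gmul1g {_}. Arguments gmulVg {_}.

Section GroupTheory.
Variable G : Group.
Implicit Types x y g : G.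

Lemma mulgV x : gmul x (ginv x) = gone.
Proof.
  set (e := gmul x (ginv x)).
  assert (He : gmul e e = e).
  { unfold e. rewrite <- (gmulA x), (gmulA (ginv x) x), gmulVg, gmul1g. reflexivity. }
  transitivity (gmul (gmul (ginv e) e) e); [rewrite gmulVg, gmul1g; reflexivity|].
  rewrite <- gmulA, He. apply gmulVg.
Qed.

Lemma mulg1 x : gmul x gone = x.
Proof. rewrite <- (gmulVg x), gmulA, mulgV, gmul1g. reflexivity. Qed.

Lemma mulKg x y : gmul (ginv x) (gmul x y) = y.
Proof. rewrite gmulA, gmulVg, gmul1g. reflexivity. Qed.

Lemma ginv_unique x y : gmul x y = gone -> x = ginv y.
Proof. intro H. rewrite <- (mulg1 x), <- (mulgV y), gmulA, H, gmul1g. reflexivity. Qed.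

Lemma ginv1 : ginv (@gone G) = gone.
Proof. symmetry. apply ginv_unique, gmul1g. Qed.

Lemma ginvM x y : ginv (gmul x y) = gmul (ginv y) (ginv x).
Proof.
  symmetry. apply ginv_unique.
  rewrite <- gmulA, (gmulA (ginv x)), gmulVg, gmul1g, gmulVg. reflexivity.
Qed.

Lemma gpowD x a b : gpow G x (a + b) = gmul (gpow G x a) (gpow G x b).
Proof.
  induction b as [|b IH]; simpl.
  - rewrite Nat.add_0_r, mulg1. reflexivity.
  - rewrite Nat.add_succ_r. simpl. rewrite IH, gmulA. reflexivity.
Qed.

Lemma gpowM x a b : gpow G x (a * b) = gpow G (gpow G x a) b.
Proof.
  induction b as [|b IH]; simpl.
  - rewrite Nat.mul_0_r. reflexivity.
  - rewrite Nat.mul_succ_r, gpowD, IH. reflexivity.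
Qed.

Lemma gpow_commute x n : gmul x (gpow G x n) = gmul (gpow G x n) x.
Proof.
  assert (Hx : gpow G x 1 = x) by apply gmul1g.
  rewrite <- Hx at 1 4. rewrite <- !gpowD, Nat.add_comm. reflexivity.
Qed.

Lemma gpowV x n : gpow G (ginv x) n = ginv (gpow G x n).
Proof.
  induction n as [|n IH]; simpl.
  - symmetry. apply ginv1.
  - rewrite IH, <- ginvM, gpow_commute. reflexivity.
Qed.

Lemma gpow_conj g x n : gpow G (conj g x) n = conj g (gpow G x n).
Proof.
  unfold conj. induction n as [|n IH]; simpl.
  - rewrite mulg1, mulgV. reflexivity.
  - rewrite IH, <- !gmulA, (gmulA (ginv g)), gmulVg, gmul1g. reflexivity.
Qed.

Lemma zpow_of_nat x n : zpow G x (Z.of_nat n) = gpow G x n.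
Proof. destruct n; simpl; [reflexivity|]. rewrite SuccNat2Pos.id_succ. reflexivity. Qed.

Lemma subgroup_gpow (H : G -> Prop) x n : is_subgroup G H -> H x -> H (gpow G x n).
Proof. intros [H1 [HM _]] Hx. induction n; simpl; auto. Qed.

End GroupTheory.

Section Morphism.
Variables G Gam : Group.
Variable pi : G -> Gam.
Hypothesis piM : forall x y, pi (gmul x y) = gmul (pi x) (pi y).

Lemma morph1 : pi gone = gone.
Proof.
  pose proof (piM gone gone) as H. rewrite gmul1g in H.
  rewrite <- (mulKg _ (pi gone) (pi gone)), <- H, gmulVg. reflexivity.
Qed.

Lemma morphV x : pi (ginv x) = ginv (pi x).
Proof. apply ginv_unique. rewrite <- piM, gmulVg. apply morph1. Qed.

End Morphism.

Lemma Rabs_le_iff x a : Rabs x <= a <-> -a <= x <= a.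
Proof.
  split; [|apply Rabs_le].
  intro H. pose proof (Rle_abs x). pose proof (Rle_abs (-x)). rewrite Rabs_Ropp in *. lra.
Qed.

Lemma Rabs_bounds x : - Rabs x <= x <= Rabs x.
Proof. apply Rabs_le_iff, Rle_refl. Qed.

Lemma Rabs_lin_le a x y M K : Rabs x <= M -> Rabs y <= K -> Rabs (a * x + y) <= Rabs a * M + K.
Proof.
  intros Hx Hy. eapply Rle_trans; [apply Rabs_triang|]. rewrite Rabs_mult.
  apply Rplus_le_compat; auto. apply Rmult_le_compat_l; auto. apply Rabs_pos.
Qed.

Lemma fsum_ext m u v : (forall i, (i < m)%nat -> u i = v i) -> fsum m u = fsum m v.
Proof.
  induction m as [|m IH]; intro H; simpl; auto.
  rewrite IH by (intros i Hi; apply H; lia). rewrite H by lia. reflexivity.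
Qed.

Lemma fsum_split k1 k2 u :
  fsum (k1 + k2) u = fsum k1 u + fsum k2 (fun j => u (k1 + j)%nat).
Proof.
  induction k2 as [|k2 IH]; simpl.
  - rewrite Nat.add_0_r. ring.
  - rewrite Nat.add_succ_r. simpl. rewrite IH. ring.
Qed.

Lemma fsum_lin_coef m c (a b d : nat -> R) :
  fsum m (fun i => (c * a i + b i) * d i) =
  c * fsum m (fun i => a i * d i) + fsum m (fun i => b i * d i).
Proof. induction m as [|m IH]; simpl; [|rewrite IH]; ring. Qed.

Lemma fsum_zero_coef m (d : nat -> R) : fsum m (fun i => 0 * d i) = 0.
Proof. induction m as [|m IH]; simpl; [|rewrite IH]; ring. Qed.

Definition trunc (m : nat) (a : nat -> R) (i : nat) : R :=
  if Nat.ltb i m then a i else 0.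

Lemma trunc_out m a i : (m <= i)%nat -> trunc m a i = 0.
Proof. intro H. unfold trunc. replace (Nat.ltb i m) with false; [reflexivity|].
  symmetry. apply Nat.ltb_ge. exact H. Qed.

Lemma fsum_trunc m a (d : nat -> R) :
  fsum m (fun i => trunc m a i * d i) = fsum m (fun i => a i * d i).
Proof.
  apply fsum_ext. intros i Hi. unfold trunc. apply Nat.ltb_lt in Hi. rewrite Hi. reflexivity.
Qed.

Section FiniteCodimension.
Context {X : Type}.
Implicit Types V W : (X -> R) -> Prop.

Definition subspace V : Prop :=
  V (fun _ => 0) /\ forall v w a, V v -> V w -> V (fun x => a * v x + w x).

Definition fincodim V W : Prop :=
  exists k (vs : nat -> X -> R), (forall j, V (vs j)) /\
    forall v, V v -> exists lam : nat -> R,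
      W (fun x => v x - fsum k (fun j => lam j * vs j x)).

Definition linear_rel (Rl : (X -> R) -> (nat -> R) -> Prop) : Prop :=
  forall v w a b c, Rl v a -> Rl w b ->
    Rl (fun x => c * v x + w x) (fun i => c * a i + b i).

Lemma subspace_sub_fsum V k lam vs v : subspace V -> (forall j, V (vs j)) -> V v ->
  V (fun x => v x - fsum k (fun j => lam j * vs j x)).
Proof.
  intros [_ Vlin] Hvs Hv. induction k as [|k IH].
  - simpl. replace (fun x => v x - 0) with v; auto.
    apply functional_extensionality; intro; ring.
  - replace (fun x => v x - fsum (S k) (fun j => lam j * vs j x))
      with (fun x => - lam k * vs k x + (v x - fsum k (fun j => lam j * vs j x))).
    + apply Vlin; auto.
    + apply functional_extensionality; intro; simpl; ring.
Qed.

Lemma fincodim_mono V W W' : subspace V -> (forall v, V v -> W v -> W' v) ->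
  fincodim V W -> fincodim V W'.
Proof.
  intros HV HW [k [vs [Hvs H]]]. exists k, vs. split; auto.
  intros v Hv. destruct (H v Hv) as [lam Hl]. exists lam.
  apply HW; auto. apply subspace_sub_fsum; auto.
Qed.

Lemma fincodim_trans V W1 W2 : subspace V -> fincodim V W1 ->
  fincodim (fun v => V v /\ W1 v) W2 -> fincodim V W2.
Proof.
  intros HV [k1 [vs1 [Hvs1 H1]]] [k2 [vs2 [Hvs2 H2]]].
  exists (k1 + k2)%nat, (fun j => if Nat.ltb j k1 then vs1 j else vs2 (j - k1)%nat). split.
  { intro j. destruct (Nat.ltb j k1); [apply Hvs1 | apply Hvs2]. }
  intros v Hv. destruct (H1 v Hv) as [lam1 Hw1].
  destruct (H2 (fun x => v x - fsum k1 (fun j => lam1 j * vs1 j x))) as [lam2 Hw2].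
  { split; auto. apply subspace_sub_fsum; auto. }
  exists (fun j => if Nat.ltb j k1 then lam1 j else lam2 (j - k1)%nat).
  match goal with H : W2 ?f |- W2 ?g => replace g with f; [exact H|] end.
  apply functional_extensionality; intro x. rewrite fsum_split.
  assert (Hsum1 : forall i, (i < k1)%nat -> lam1 i * vs1 i x =
    (if Nat.ltb i k1 then lam1 i else lam2 (i - k1)%nat) *
    (if Nat.ltb i k1 then vs1 i else vs2 (i - k1)%nat) x).
  { intros i Hi. apply Nat.ltb_lt in Hi. rewrite Hi. reflexivity. }
  assert (Hsum2 : forall i, (i < k2)%nat -> lam2 i * vs2 i x =
    (if Nat.ltb (k1 + i) k1 then lam1 (k1 + i)%nat else lam2 (k1 + i - k1)%nat) *
    (if Nat.ltb (k1 + i) k1 then vs1 (k1 + i)%nat else vs2 (k1 + i - k1)%nat) x).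
  { intros i _. replace (Nat.ltb (k1 + i) k1) with false by (symmetry; apply Nat.ltb_ge; lia).
    replace (k1 + i - k1)%nat with i by lia. reflexivity. }
  rewrite (fsum_ext _ _ _ Hsum1), (fsum_ext _ _ _ Hsum2). ring.
Qed.

Lemma fincodim_pivot V W (u : X -> R) : V u ->
  fincodim V (fun v => exists t, W (fun x => v x - t * u x)) -> fincodim V W.
Proof.
  intros Hu [k [vs [Hvs H]]].
  exists (S k), (fun j => if Nat.eqb j k then u else vs j). split.
  { intro j. destruct (Nat.eqb j k); auto. }
  intros v Hv. destruct (H v Hv) as [lam [t Ht]].
  exists (fun j => if Nat.eqb j k then t else lam j).
  match goal with H : W ?f |- W ?g => replace g with f; [exact H|] end.
  apply functional_extensionality; intro x. simpl. rewrite Nat.eqb_refl.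
  assert (Hsum : forall i, (i < k)%nat -> lam i * vs i x =
    (if Nat.eqb i k then t else lam i) * (if Nat.eqb i k then u else vs i) x).
  { intros i Hi. replace (Nat.eqb i k) with false by (symmetry; apply Nat.eqb_neq; lia).
    reflexivity. }
  rewrite (fsum_ext _ _ _ Hsum). ring.
Qed.

(* A total linear relation into coordinate vectors supported on [0, m) is a
   multivalued linear map to R^m; its kernel therefore has codimension <= m. *)
Lemma fincodim_linear_rel_kernel V m Rl : subspace V -> linear_rel Rl ->
  (forall v, V v -> exists a, Rl v a /\ forall i, (m <= i)%nat -> a i = 0) ->
  fincodim V (fun v => Rl v (fun _ => 0)).
Proof.
  intro HV. revert Rl. induction m as [|m IH]; intros Rl Rlin Htot.
  - exists 0%nat, (fun _ _ => 0). split; [intro; apply HV|].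
    intros v Hv. exists (fun _ => 0). destruct (Htot v Hv) as [a [Ha Hz]].
    replace (fun x => v x - fsum 0 (fun j => 0 * 0)) with v.
    + replace (fun _ : nat => 0) with a; auto.
      apply functional_extensionality; intro; apply Hz; lia.
    + apply functional_extensionality; intro; simpl; ring.
  - destruct (classic (exists u a, V u /\ Rl u a /\
                 (forall i, (S m <= i)%nat -> a i = 0) /\ a m <> 0))
      as [[u [au [Vu [Ru [Zu Nu]]]]] | Hno].
    + (* eliminate the m-th coordinate against the pivot u *)
      apply (fincodim_pivot V _ u Vu).
      apply (IH (fun v a => exists t, Rl (fun x => v x - t * u x) a)).
      * intros v w a b c [t Ht] [s Hs]. exists (c * t + s).
        replace (fun x => c * v x + w x - (c * t + s) * u x)
          with (fun x => c * (v x - t * u x) + (w x - s * u x)); [now apply Rlin|].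
        apply functional_extensionality; intro; ring.
      * intros v Hv. destruct (Htot v Hv) as [a [Ha Hz]].
        set (t := a m / au m). exists (fun i => - t * au i + a i). split.
        -- exists t.
           replace (fun x => v x - t * u x) with (fun x => - t * u x + v x); [now apply Rlin|].
           apply functional_extensionality; intro; ring.
        -- intros i Hi. destruct (Nat.eq_dec i m) as [->|Hne].
           ++ unfold t. field. exact Nu.
           ++ rewrite Zu, Hz by lia. ring.
    + apply IH; auto. intros v Hv. destruct (Htot v Hv) as [a [Ha Hz]].
      exists a. split; auto. intros i Hi. destruct (Nat.eq_dec i m) as [->|Hne].
      * apply NNPP. intro Hn. apply Hno. exists v, a. auto.
      * apply Hz. lia.
Qed.

End FiniteCodimension.

Section DyadicRate.
Implicit Types x : nat -> R.

Definition dyadic_rate x : R :=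
  epsilon (inhabits 0) (fun l => exists K, forall n, Rabs (l * 2 ^ n - x n) <= K).

Lemma pow2_pos n : 0 < 2 ^ n.
Proof. apply pow_lt. lra. Qed.

Lemma bounded_dyadic_multiple d C : (forall n, Rabs d * 2 ^ n <= C) -> d = 0.
Proof.
  intro H. destruct (Req_dec d 0) as [|Hd]; auto. exfalso.
  assert (Hp : 0 < Rabs d) by (apply Rabs_pos_lt; auto).
  destruct (INR_unbounded (C / Rabs d)) as [n Hn].
  assert (H2n : 1 + INR n * 1 <= (1 + 1) ^ n) by (apply poly; lra).
  replace (1 + 1) with 2 in H2n by ring.
  specialize (H n). apply (Rmult_lt_compat_l (Rabs d)) in Hn; auto.
  replace (Rabs d * (C / Rabs d)) with C in Hn by (field; lra).
  assert (Rabs d * INR n <= Rabs d * 2 ^ n) by (apply Rmult_le_compat_l; lra).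
  lra.
Qed.

Lemma dyadic_rate_unique x l1 l2 K1 K2 :
  (forall n, Rabs (l1 * 2 ^ n - x n) <= K1) ->
  (forall n, Rabs (l2 * 2 ^ n - x n) <= K2) -> l1 = l2.
Proof.
  intros H1 H2. apply Rminus_diag_uniq, (bounded_dyadic_multiple _ (K1 + K2)). intro n.
  specialize (H1 n). specialize (H2 n). pose proof (pow2_pos n).
  rewrite <- (Rabs_pos_eq (2 ^ n)), <- Rabs_mult by lra.
  apply Rabs_le_iff in H1, H2. apply Rabs_le_iff. nra.
Qed.

Lemma dyadic_rate_eq x l K : (forall n, Rabs (l * 2 ^ n - x n) <= K) -> dyadic_rate x = l.
Proof.
  intro H. unfold dyadic_rate.
  destruct (epsilon_spec (inhabits 0) (fun l => exists K, forall n, Rabs (l * 2 ^ n - x n) <= K))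
    as [K' HK']; eauto.
  eapply dyadic_rate_unique; eauto.
Qed.

(* (x_n - D)/2^n increases and (x_n + D)/2^n decreases; the rate lies between them. *)
Lemma dyadic_rate_approx x D : (forall n, Rabs (x (S n) - 2 * x n) <= D) ->
  forall n, Rabs (dyadic_rate x * 2 ^ n - x n) <= D.
Proof.
  intro HD.
  assert (D0 : 0 <= D) by (eapply Rle_trans; [apply Rabs_pos | apply (HD 0%nat)]).
  set (lo := fun n => (x n - D) / 2 ^ n). set (hi := fun n => (x n + D) / 2 ^ n).
  assert (Hlo : Un_growing lo).
  { intro n. unfold lo. simpl. specialize (HD n). apply Rabs_le_iff in HD. pose proof (pow2_pos n).
    replace ((x n - D) / 2 ^ n) with (2 * (x n - D) / (2 * 2 ^ n)) by (field; lra).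
    apply Rmult_le_compat_r; [apply Rlt_le, Rinv_0_lt_compat|]; lra. }
  assert (Hhi : Un_decreasing hi).
  { intro n. unfold hi. simpl. specialize (HD n). apply Rabs_le_iff in HD. pose proof (pow2_pos n).
    replace ((x n + D) / 2 ^ n) with (2 * (x n + D) / (2 * 2 ^ n)) by (field; lra).
    apply Rmult_le_compat_r; [apply Rlt_le, Rinv_0_lt_compat|]; lra. }
  assert (Hlohi : forall n m, lo n <= hi m).
  { intros n m. set (p := Nat.max n m).
    pose proof (growing_prop lo p n Hlo ltac:(lia)).
    pose proof (decreasing_prop hi m p Hhi ltac:(lia)).
    assert (lo p <= hi p).
    { unfold lo, hi, Rdiv. apply Rmult_le_compat_r; [|lra].
      left. apply Rinv_0_lt_compat, pow2_pos. }
    lra. }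
  destruct (completeness (fun r => exists n, r = lo n)) as [l [Hub Hlub]].
  { exists (hi 0%nat). intros r [n ->]. apply Hlohi. }
  { exists (lo 0%nat), 0%nat. reflexivity. }
  assert (Hl : forall n, Rabs (l * 2 ^ n - x n) <= D).
  { intro n. assert (lo n <= l) by (apply Hub; exists n; reflexivity).
    assert (l <= hi n) by (apply Hlub; intros r [m ->]; apply Hlohi).
    pose proof (pow2_pos n).
    assert (x n - D = lo n * 2 ^ n) by (unfold lo; field; lra).
    assert (x n + D = hi n * 2 ^ n) by (unfold hi; field; lra).
    apply Rabs_le_iff. nra. }
  rewrite (dyadic_rate_eq x l D Hl). exact Hl.
Qed.

End DyadicRate.

Section Homogenization.
Variable G : Group.
Variable F : G -> R.
Variable D : R.
Hypothesis hF : forall x y, Rabs (F (gmul x y) - F x - F y) <= D.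

Definition homog (g : G) : R := dyadic_rate (fun n => F (gpow G g (2 ^ n)%nat)).

Lemma homog_approx g n : Rabs (homog g * 2 ^ n - F (gpow G g (2 ^ n)%nat)) <= D.
Proof.
  apply (dyadic_rate_approx (fun n => F (gpow G g (2 ^ n)%nat))). intro m.
  replace (2 ^ S m)%nat with (2 ^ m * 2)%nat by (simpl; lia).
  rewrite gpowM. simpl. rewrite gmul1g.
  replace (F (gmul (gpow G g (2 ^ m)) (gpow G g (2 ^ m))) - 2 * F (gpow G g (2 ^ m)))
    with (F (gmul (gpow G g (2 ^ m)) (gpow G g (2 ^ m))) - F (gpow G g (2 ^ m))
          - F (gpow G g (2 ^ m))) by ring.
  apply hF.
Qed.

Lemma homog_eq g v K :
  (forall n, Rabs (v * 2 ^ n - F (gpow G g (2 ^ n)%nat)) <= K) -> homog g = v.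
Proof. apply dyadic_rate_eq. Qed.

Lemma homog_close g : Rabs (homog g - F g) <= D.
Proof. pose proof (homog_approx g 0) as H. simpl in H. rewrite gmul1g, Rmult_1_r in H. exact H. Qed.

Lemma homog_quasimorphism x y : Rabs (homog (gmul x y) - homog x - homog y) <= 4 * D.
Proof.
  pose proof (homog_close (gmul x y)) as H1. pose proof (homog_close x) as H2.
  pose proof (homog_close y) as H3. pose proof (hF x y) as H4.
  apply Rabs_le_iff in H1, H2, H3, H4. apply Rabs_le_iff. lra.
Qed.

Lemma qm_gpow_approx y k : Rabs (F (gpow G y k) - INR k * F y) <= INR k * D + D.
Proof.
  induction k as [|k IH].
  - simpl. pose proof (hF gone gone) as H. rewrite gmul1g in H.
    apply Rabs_le_iff in H. apply Rabs_le_iff. lra.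
  - rewrite S_INR. simpl gpow. pose proof (hF (gpow G y k) y) as H.
    apply Rabs_le_iff in H, IH. apply Rabs_le_iff. lra.
Qed.

Lemma homog_gpow g k : homog (gpow G g k) = INR k * homog g.
Proof.
  apply (homog_eq _ _ (INR k * D + (INR k * D + D))). intro n.
  rewrite <- gpowM, Nat.mul_comm, gpowM.
  set (y := gpow G g (2 ^ n)).
  pose proof (qm_gpow_approx y k) as Hy. rewrite <- Rabs_Ropp in Hy.
  pose proof (Rabs_lin_le (INR k) _ _ _ _ (homog_approx g n) Hy) as H.
  rewrite (Rabs_pos_eq (INR k)) in H by apply pos_INR.
  replace (INR k * homog g * 2 ^ n - F (gpow G y k))
    with (INR k * (homog g * 2 ^ n - F y) + - (F (gpow G y k) - INR k * F y)) by ring.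
  exact H.
Qed.

Lemma homog_inv g : homog (ginv g) = - homog g.
Proof.
  apply (homog_eq _ _ (2 * D + Rabs (F gone))). intro n.
  rewrite gpowV. set (y := gpow G g (2 ^ n)).
  pose proof (homog_approx g n) as H1. fold y in H1.
  pose proof (hF (ginv y) y) as H2. rewrite gmulVg in H2.
  pose proof (Rabs_bounds (F gone)).
  apply Rabs_le_iff in H1, H2. apply Rabs_le_iff. lra.
Qed.

Lemma homog_conj h g : homog (conj h g) = homog g.
Proof.
  apply (homog_eq _ _ (3 * D + Rabs (F h) + Rabs (F (ginv h)))). intro n.
  rewrite gpow_conj. set (y := gpow G g (2 ^ n)).
  pose proof (homog_approx g n) as H1. fold y in H1. unfold conj.
  pose proof (hF (gmul h y) (ginv h)) as H2. pose proof (hF h y) as H3.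
  pose proof (Rabs_bounds (F h)). pose proof (Rabs_bounds (F (ginv h))).
  apply Rabs_le_iff in H1, H2, H3. apply Rabs_le_iff. lra.
Qed.

Lemma homog_zpow g z : homog (zpow G g z) = IZR z * homog g.
Proof.
  destruct z as [|p|p]; simpl.
  - pose proof (homog_gpow g 0) as H. simpl in H. rewrite H. ring.
  - rewrite homog_gpow, INR_IZR_INZ, positive_nat_Z. reflexivity.
  - rewrite homog_gpow, homog_inv, INR_IZR_INZ, positive_nat_Z, <- Pos2Z.opp_pos, opp_IZR.
    ring.
Qed.

Lemma invariant_hqm_homog (L : G -> Prop) : invariant_hqm G L homog.
Proof.
  split; [|split].
  - exists (4 * D). intros x y _ _. apply homog_quasimorphism.
  - intros x z _. apply homog_zpow.
  - intros g x _. apply homog_conj.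
Qed.

End Homogenization.

Lemma cob2_cob1 (H : Group) (f : H -> R) g h k : cob2 H (cob1 H f) g h k = 0.
Proof. unfold cob2, cob1. rewrite !gmulA. ring. Qed.

Lemma cob3_cob2 (H : Group) (u : H -> H -> R) g h k l : cob3 H (cob2 H u) g h k l = 0.
Proof. unfold cob3, cob2. rewrite !gmulA. ring. Qed.

Lemma bounded2_lin (H : Group) (b1 b2 : H -> H -> R) c :
  bounded2 H b1 -> bounded2 H b2 -> bounded2 H (fun x y => c * b1 x y + b2 x y).
Proof.
  intros [M1 H1] [M2 H2]. exists (Rabs c * M1 + M2). intros x y. apply Rabs_lin_le; auto.
Qed.

Section InvariantFunctions.
Variable G : Group.
Variable N : G -> Prop.
Hypothesis hN : is_subgroup G N.

Lemma subspace_invariant_hqm : subspace (invariant_hqm G N).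
Proof.
  split.
  - split; [|split].
    + exists 0. intros. rewrite Rminus_0_r, Rminus_0_r, Rabs_R0. apply Rle_refl.
    + intros. ring.
    + reflexivity.
  - intros v w a [[D1 H1] [Hh1 Hi1]] [[D2 H2] [Hh2 Hi2]]. split; [|split].
    + exists (Rabs a * D1 + D2). intros x y Hx Hy.
      replace (a * v (gmul x y) + w (gmul x y) - (a * v x + w x) - (a * v y + w y))
        with (a * (v (gmul x y) - v x - v y) + (w (gmul x y) - w x - w y)) by ring.
      apply Rabs_lin_le; auto.
    + intros x z Hx. rewrite Hh1, Hh2 by auto. ring.
    + intros g x Hx. rewrite Hi1, Hi2 by auto. reflexivity.
Qed.

Lemma invariant_hom_lin v w a : invariant_hom G N v -> invariant_hom G N w ->
  invariant_hom G N (fun x => a * v x + w x).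
Proof.
  intros [Ha1 Hi1] [Ha2 Hi2]. split.
  - intros x y Hx Hy. rewrite Ha1, Ha2 by auto. ring.
  - intros g x Hx. rewrite Hi1, Hi2 by auto. reflexivity.
Qed.

Lemma invariant_hom_gpow phi x k : invariant_hom G N phi -> N x ->
  phi (gpow G x k) = INR k * phi x.
Proof.
  intros [Ha _] Hx. induction k as [|k IH]; simpl gpow.
  - pose proof (Ha gone gone (proj1 hN) (proj1 hN)) as H. rewrite gmul1g in H. simpl. lra.
  - rewrite Ha, IH, S_INR; [ring | apply subgroup_gpow; auto | exact Hx].
Qed.

Lemma invariant_hqm_gpow psi x k : invariant_hqm G N psi -> N x ->
  psi (gpow G x k) = INR k * psi x.
Proof.
  intros [_ [Hh _]] Hx. rewrite <- zpow_of_nat, Hh, INR_IZR_INZ by auto. reflexivity.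
Qed.

End InvariantFunctions.

Definition finspan_ker_c3 (Gam : Group) : Prop :=
  exists (m : nat) (c : nat -> Gam -> Gam -> Gam -> R),
    forall z, bounded3 Gam z -> cocycle3 Gam z ->
      (exists u, forall g h k, z g h k = cob2 Gam u g h k) ->
      exists (a : nat -> R) (b : Gam -> Gam -> R), bounded2 Gam b /\
        forall g h k, z g h k = fsum m (fun i => a i * c i g h k) + cob2 Gam b g h k.

Lemma finspan_ker_c3_of_findim_ker_c3 Gam : findim_ker_c3 Gam -> finspan_ker_c3 Gam.
Proof. intros [m [c [_ Hc]]]. exists m, c. exact Hc. Qed.

Lemma finspan_ker_c3_of_findim_H3b Gam : findim_H3b Gam -> finspan_ker_c3 Gam.
Proof. intros [m [c [_ Hc]]]. exists m, c. intros z Hb Hz _. apply Hc; auto. Qed.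

Lemma findim_H2_mod_d2_of_findim_H2 G Gam N pi :
  findim_H2 Gam -> findim_H2_mod_d2 G Gam N pi.
Proof.
  intros [m [c [Hc H]]]. exists m, c. split; auto. intros z Hz.
  destruct (H z Hz) as [a [b E]]. exists a, (fun _ _ => 0), b. split.
  - exists (fun _ => 0). split; [split; intros; ring|].
    exists (fun _ => 0). split; intros; unfold cob1; ring.
  - intros g h. rewrite E. ring.
Qed.

Section QuotientCochains.
Variables G Gam : Group.
Variable N : G -> Prop.
Variable pi : G -> Gam.
Hypothesis hN : is_normal G N.
Hypothesis hpi : quotient_map G Gam N pi.

Lemma pi_mul x y : pi (gmul x y) = gmul (pi x) (pi y).
Proof. apply hpi. Qed.

Lemma pi_ker x : pi x = gone <-> N x.
Proof. apply hpi. Qed.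

Lemma N_mul x y : N x -> N y -> N (gmul x y).
Proof. apply hN. Qed.

Lemma N_inv x : N x -> N (ginv x).
Proof. apply hN. Qed.

Lemma N_conj g x : N x -> N (conj g x).
Proof. apply hN. Qed.

Definition sec (a : Gam) : G := epsilon (inhabits gone) (fun x => pi x = a).

Lemma pi_sec a : pi (sec a) = a.
Proof. apply (epsilon_spec (inhabits gone) (fun x => pi x = a)), hpi. Qed.

Definition npart (g : G) : G := gmul g (ginv (sec (pi g))).

Definition sec_cocycle (a b : Gam) : G :=
  gmul (gmul (sec a) (sec b)) (ginv (sec (gmul a b))).

Lemma N_npart g : N (npart g).
Proof.
  apply pi_ker. unfold npart. rewrite pi_mul, (morphV _ _ _ pi_mul), pi_sec. apply mulgV.
Qed.

Lemma N_sec_cocycle a b : N (sec_cocycle a b).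
Proof.
  apply pi_ker. unfold sec_cocycle.
  rewrite !pi_mul, (morphV _ _ _ pi_mul), !pi_sec. apply mulgV.
Qed.

Lemma npart_mul g h : npart (gmul g h) =
  gmul (gmul (npart g) (conj (sec (pi g)) (npart h))) (sec_cocycle (pi g) (pi h)).
Proof. unfold npart, sec_cocycle, conj. rewrite pi_mul, <- !gmulA, !mulKg. reflexivity. Qed.

Definition sec_extension (psi : G -> R) (g : G) : R := psi (npart g).

Definition sec_obstruction (psi : G -> R) (a b : Gam) : R := psi (sec_cocycle a b).

Definition sec_defect (psi : G -> R) (g h : G) : R :=
  cob1 G (sec_extension psi) g h + sec_obstruction psi (pi g) (pi h).

Lemma cob2_sec_obstruction psi g h k :
  cob2 Gam (sec_obstruction psi) (pi g) (pi h) (pi k) = cob2 G (sec_defect psi) g h k.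
Proof.
  pose proof (cob2_cob1 G (sec_extension psi) g h k) as E.
  unfold cob2, sec_defect in *. rewrite !pi_mul. unfold cob1 in *. lra.
Qed.

(* [npart_mul] and G-invariance reduce [sec_defect] to two defects of psi on N. *)
Lemma sec_defect_bounded psi D :
  (forall x y, N x -> N y -> Rabs (psi (gmul x y) - psi x - psi y) <= D) ->
  (forall g x, N x -> psi (conj g x) = psi x) ->
  forall g h, Rabs (sec_defect psi g h) <= 2 * D.
Proof.
  intros HD Hinv g h. unfold sec_defect, cob1, sec_extension, sec_obstruction.
  rewrite npart_mul.
  pose proof (N_conj (sec (pi g)) _ (N_npart h)) as Nh.
  pose proof (HD _ _ (N_mul _ _ (N_npart g) Nh) (N_sec_cocycle (pi g) (pi h))) as H1.
  pose proof (HD _ _ (N_npart g) Nh) as H2. rewrite Hinv in H2 by apply N_npart.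
  apply Rabs_le_iff in H1, H2. apply Rabs_le_iff. lra.
Qed.

Lemma cob2_sec_obstruction_bounded psi D :
  (forall x y, N x -> N y -> Rabs (psi (gmul x y) - psi x - psi y) <= D) ->
  (forall g x, N x -> psi (conj g x) = psi x) ->
  forall a b c, Rabs (cob2 Gam (sec_obstruction psi) a b c) <= 8 * D.
Proof.
  intros HD Hinv a b c.
  destruct (proj1 (proj2 hpi) a) as [g <-], (proj1 (proj2 hpi) b) as [h <-],
    (proj1 (proj2 hpi) c) as [k <-].
  rewrite cob2_sec_obstruction. unfold cob2.
  pose proof (sec_defect_bounded psi D HD Hinv) as B.
  pose proof (B h k) as H1. pose proof (B (gmul g h) k) as H2.
  pose proof (B g (gmul h k)) as H3. pose proof (B g h) as H4.
  apply Rabs_le_iff in H1, H2, H3, H4. apply Rabs_le_iff. lra.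
Qed.

Definition obstruction_cob_bounded (psi : G -> R) : Prop :=
  exists b, bounded2 Gam b /\
    forall x y z, cob2 Gam (sec_obstruction psi) x y z = cob2 Gam b x y z.

Definition obstruction_split (psi : G -> R) : Prop :=
  exists b t b', bounded2 Gam b /\ in_transgression_image G Gam N pi t /\
    forall x y, sec_obstruction psi x y = b x y + t x y + cob1 Gam b' x y.

Definition trivial_in_W (L : G -> Prop) (psi : G -> R) : Prop :=
  exists h phi, invariant_hom G N h /\ invariant_hqm G L phi /\
    forall x, N x -> psi x = h x + phi x.

Lemma in_transgression_image_lin t1 t2 c :
  in_transgression_image G Gam N pi t1 -> in_transgression_image G Gam N pi t2 ->
  in_transgression_image G Gam N pi (fun x y => c * t1 x y + t2 x y).
Proof.
  intros [p1 [Hp1 [f1 [A1 B1]]]] [p2 [Hp2 [f2 [A2 B2]]]].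
  exists (fun x => c * p1 x + p2 x). split; [now apply invariant_hom_lin|].
  exists (fun x => c * f1 x + f2 x). split.
  - intros n g Hn. rewrite A1, A2 by auto. ring.
  - intros g h. rewrite B1, B2. unfold cob1. ring.
Qed.

Lemma cob2_sec_obstruction_lin c v w x y z :
  cob2 Gam (sec_obstruction (fun g => c * v g + w g)) x y z =
  c * cob2 Gam (sec_obstruction v) x y z + cob2 Gam (sec_obstruction w) x y z.
Proof. unfold cob2, sec_obstruction. ring. Qed.

Lemma subspace_obstruction_cob_bounded :
  subspace (fun psi => invariant_hqm G N psi /\ obstruction_cob_bounded psi).
Proof.
  destruct (subspace_invariant_hqm G N) as [V0 Vlin]. split.
  - split; auto. exists (fun _ _ => 0). split.
    + exists 0. intros. rewrite Rabs_R0. apply Rle_refl.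
    + intros. unfold cob2, sec_obstruction. ring.
  - intros v w c [Hv [b1 [Hb1 E1]]] [Hw [b2 [Hb2 E2]]]. split; auto.
    exists (fun x y => c * b1 x y + b2 x y). split; [now apply bounded2_lin|].
    intros x y z. rewrite cob2_sec_obstruction_lin, E1, E2. unfold cob2. ring.
Qed.

Lemma fincodim_obstruction_cob_bounded :
  finspan_ker_c3 Gam -> fincodim (invariant_hqm G N) obstruction_cob_bounded.
Proof.
  intros [m [c Hc]].
  (* [Rl psi a]: a are coordinates of the class of cob2 u_psi in Ker c^3. *)
  set (Rl := fun psi a => exists b, bounded2 Gam b /\ forall x y z,
    cob2 Gam (sec_obstruction psi) x y z
    = fsum m (fun i => a i * c i x y z) + cob2 Gam b x y z).
  apply (fincodim_mono _ (fun psi => Rl psi (fun _ => 0))); [apply subspace_invariant_hqm| |].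
  { intros psi _ [b [Hb E]]. exists b. split; auto.
    intros x y z. rewrite E, fsum_zero_coef. ring. }
  apply (fincodim_linear_rel_kernel _ m); [apply subspace_invariant_hqm | |].
  - intros v w a a' k [b1 [Hb1 E1]] [b2 [Hb2 E2]].
    exists (fun x y => k * b1 x y + b2 x y). split; [now apply bounded2_lin|].
    intros x y z. rewrite fsum_lin_coef, cob2_sec_obstruction_lin, E1, E2. unfold cob2. ring.
  - intros psi [[D HD] [_ Hinv]].
    destruct (Hc (cob2 Gam (sec_obstruction psi))) as [a [b [Hb E]]].
    + exists (8 * D). exact (cob2_sec_obstruction_bounded psi D HD Hinv).
    + intros x y z w. apply cob3_cob2.
    + exists (sec_obstruction psi). reflexivity.
    + exists (trunc m a). split; [|apply trunc_out].
      exists b. split; auto. intros x y z. rewrite fsum_trunc. apply E.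
Qed.

Lemma fincodim_obstruction_split : findim_H2_mod_d2 G Gam N pi ->
  fincodim (fun psi => invariant_hqm G N psi /\ obstruction_cob_bounded psi)
           obstruction_split.
Proof.
  intros [m [c [_ Hc]]].
  (* [Rl psi a]: a are coordinates in H^2(Gamma)/d_2(H^1(N)^G) of the 2-cocycle
     u_psi - b, where cob2 u_psi = cob2 b with b bounded. *)
  set (Rl := fun psi a => exists b t b', bounded2 Gam b /\ in_transgression_image G Gam N pi t /\
    forall x y, sec_obstruction psi x y
      = b x y + fsum m (fun i => a i * c i x y) + t x y + cob1 Gam b' x y).
  apply (fincodim_mono _ (fun psi => Rl psi (fun _ => 0)));
    [apply subspace_obstruction_cob_bounded| |].
  { intros psi _ [b [t [b' [Hb [Ht E]]]]]. exists b, t, b'. split; [|split]; auto.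
    intros x y. rewrite E, fsum_zero_coef. ring. }
  apply (fincodim_linear_rel_kernel _ m); [apply subspace_obstruction_cob_bounded | |].
  - intros v w a a' k [b1 [t1 [b1' [Hb1 [Ht1 E1]]]]] [b2 [t2 [b2' [Hb2 [Ht2 E2]]]]].
    exists (fun x y => k * b1 x y + b2 x y), (fun x y => k * t1 x y + t2 x y),
      (fun x => k * b1' x + b2' x).
    split; [now apply bounded2_lin|]. split; [now apply in_transgression_image_lin|].
    intros x y. rewrite fsum_lin_coef.
    unfold sec_obstruction in *. rewrite E1, E2. unfold cob1. ring.
  - intros psi [_ [b [Hb E]]].
    destruct (Hc (fun x y => sec_obstruction psi x y - b x y)) as [a [t [b' [Ht E2]]]].
    + intros x y z. specialize (E x y z). unfold cob2 in *. lra.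
    + exists (trunc m a). split; [|apply trunc_out].
      exists b, t, b'. split; [|split]; auto.
      intros x y. rewrite fsum_trunc. specialize (E2 x y). lra.
Qed.

(* On N, npart y = y s(1)^-1, so the extension is psi(y) + phi(y) up to a
   bounded error and both are homogeneous. *)
Lemma homog_sec_extension_on_N psi phi f (b' : Gam -> R) x :
  invariant_hqm G N psi -> invariant_hom G N phi ->
  (forall n g, N n -> f (gmul n g) = phi n + f g) -> N x ->
  homog G (fun g => sec_extension psi g + f g + b' (pi g)) x = psi x + phi x.
Proof.
  intros Hpsi Hphi Hf_N Hx. pose proof Hpsi as [[D HD] _].
  set (s := ginv (sec gone)).
  assert (Ns : N s) by (apply N_inv, pi_ker, pi_sec).
  apply (homog_eq _ _ x _ (D + Rabs (psi s) + Rabs (f gone) + Rabs (b' gone))). intro n.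
  set (y := gpow G x (2 ^ n)).
  assert (Ny : N y) by (apply subgroup_gpow; auto; apply hN).
  assert (Hy : sec_extension psi y + f y + b' (pi y) = psi (gmul y s) + phi y + f gone + b' gone).
  { unfold sec_extension, npart.
    replace (pi y) with (@gone Gam) by (symmetry; apply pi_ker; exact Ny).
    replace (f y) with (f (gmul y gone)) by (rewrite mulg1; reflexivity).
    rewrite Hf_N by exact Ny. fold s. ring. }
  assert (H2n : INR (2 ^ n) = 2 ^ n) by (rewrite pow_INR; simpl; f_equal; ring).
  assert (Hpsi_y : psi y = 2 ^ n * psi x).
  { rewrite <- H2n. apply (invariant_hqm_gpow G N); auto. }
  assert (Hphi_y : phi y = 2 ^ n * phi x).
  { rewrite <- H2n. apply (invariant_hom_gpow G N); auto. apply hN. }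
  pose proof (HD y s Ny Ns) as H1.
  pose proof (Rabs_bounds (psi s)). pose proof (Rabs_bounds (f gone)).
  pose proof (Rabs_bounds (b' gone)).
  rewrite Hy. apply Rabs_le_iff in H1. apply Rabs_le_iff. lra.
Qed.

Lemma trivial_in_W_of_obstruction_split L psi :
  invariant_hqm G N psi -> obstruction_split psi -> trivial_in_W L psi.
Proof.
  intros Hpsi [b [t [b' [[M HM] [[phi [Hphi [f [Hf_N Hf_cob]]]] E]]]]].
  pose proof Hpsi as [[D HD] [_ Hinv]].
  set (F := fun g => sec_extension psi g + f g + b' (pi g)).
  assert (HF : forall x y, Rabs (F (gmul x y) - F x - F y) <= 2 * D + M).
  { intros x y. pose proof (sec_defect_bounded psi D HD Hinv x y) as Hd.
    pose proof (E (pi x) (pi y)) as Exy. rewrite Hf_cob in Exy.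
    pose proof (HM (pi x) (pi y)) as Hb.
    unfold F. rewrite pi_mul. unfold sec_defect, cob1 in *.
    apply Rabs_le_iff in Hd, Hb. apply Rabs_le_iff. lra. }
  exists (fun x => - phi x), (homog G F). split; [|split].
  - destruct Hphi as [Ha Hi].
    split; intros; [rewrite Ha by auto | rewrite Hi by auto]; ring.
  - exact (invariant_hqm_homog G F _ HF L).
  - intros x Hx. unfold F. rewrite (homog_sec_extension_on_N psi phi); auto. ring.
Qed.

Lemma fincodim_trivial_in_W L : finspan_ker_c3 Gam -> findim_H2_mod_d2 G Gam N pi ->
  fincodim (invariant_hqm G N) (trivial_in_W L).
Proof.
  intros Hc3 Hd2.
  apply (fincodim_mono _ obstruction_split); [apply subspace_invariant_hqm | |].
  { intros psi Hpsi Hsplit. now apply trivial_in_W_of_obstruction_split. }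
  apply (fincodim_trans _ obstruction_cob_bounded); [apply subspace_invariant_hqm | |].
  - now apply fincodim_obstruction_cob_bounded.
  - now apply fincodim_obstruction_split.
Qed.

Lemma findim_W_of_fincodim L : fincodim (invariant_hqm G N) (trivial_in_W L) -> findim_W G L N.
Proof.
  intros [k [vs [Hvs H]]]. exists k, vs. split; auto.
  intros psi Hpsi. destruct (H psi Hpsi) as [lam [h [phi [Hh [Hphi E]]]]].
  exists lam, h, phi. split; [|split]; auto.
  intros x Hx. specialize (E x Hx). lra.
Qed.

End QuotientCochains.

Theorem proposition5p6 (G Gam : Group) (N : G -> Prop) (pi : G -> Gam)
  (hN : is_normal G N) (hpi : quotient_map G Gam N pi) :
  ((findim_ker_c3 Gam /\ findim_H2_mod_d2 G Gam N pi) ->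
     forall L : G -> Prop, is_normal G L -> (forall x, N x -> L x) ->
       findim_W G L N) /\
  ((findim_H3b Gam /\ findim_H2 Gam) ->
     forall L : G -> Prop, is_normal G L -> (forall x, N x -> L x) ->
       findim_W G L N).
Proof.
  split; intros [Hc3 H2] L _ _;
    apply (findim_W_of_fincodim G N), (fincodim_trivial_in_W G Gam N pi); auto.
  - now apply finspan_ker_c3_of_findim_ker_c3.
  - now apply finspan_ker_c3_of_findim_H3b.
  - now apply findim_H2_mod_d2_of_findim_H2.
Qed.
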